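(* Let $G$ be a graph whose adjacency matrix has exactly two eigenvalues (counted with multiplicity) different from $\pm1$, namely $r>1$ and $s<-1$; all other eigenvalues are equal to $1$ or $-1$. (i) One connected component of $G$ has all vertex degrees at least $2$, and all other connected components are isomorphic to $K_2$. (ii) If $u$ and $v$ are distinct vertices of $G$ with degrees $d_u$ and $d_v$, and every neighbor of $u$ is also a neighbor of $v$, then $d_v-d_u\geq 3$.
   Context: Graphs are finite, simple and undirected; eigenvalues of a graph are those of its adjacency matrix. *)

From HB Require Import structures.
From mathcomp Require Import all_boot all_order all_algebra.
Set Implicit Arguments. Unset Strict Implicit. Unset Printing Implicit Defensive.
Import Order.TTheory GRing.Theory Num.Theory.
Local Open Scope ring_scope.

Definition simple_graph (n : nat) (e : rel 'I_n) : Prop :=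
  symmetric e /\ irreflexive e.

Definition adjmx (R : nzRingType) (n : nat) (e : rel 'I_n) : 'M[R]_n :=
  \matrix_(i, j) (e i j)%:R.

Definition deg (n : nat) (e : rel 'I_n) (v : 'I_n) : nat := #|[set w | e v w]|.

Definition component (n : nat) (e : rel 'I_n) (v : 'I_n) : {set 'I_n} :=
  [set w | connect e v w].

From HB Require Import structures.
From mathcomp Require Import all_boot all_order all_algebra.
From mathcomp Require Import complex zify.
Import Order.TTheory GRing.Theory Num.Theory Num.Def.
Set Implicit Arguments.
Unset Strict Implicit.
Unset Printing Implicit Defensive.

(* Every eigenvalue of A has modulus at least 1, so A^2 - I is positive
   semidefinite.  On the test vectors e_u - e_v and (d_v - 1) e_u - d_u e_v
   this gives, when N(u) is contained in N(v), d_v >= d_u + 2 and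
   (d_u - 1)(d_v - 1) >= d_u^2, hence d_u >= 2 and d_v >= d_u + 3, which is (ii).
   In particular the neighbour of a vertex of degree 1 has degree 1, so a
   component containing a vertex of degree 1 is K_2.
   Since r is the only eigenvalue above 1, A <= I on the orthogonal complement
   of its eigenvector, so no two vectors orthogonal for both I and A can both
   have Rayleigh quotient above 1.  The indicator vectors of two components of
   minimum degree 2 would be such a pair, so there is at most one of them; and
   there is one, for otherwise G is a perfect matching and A^2 = I,
   contradicting r^2 > 1. *)

Local Open Scope ring_scope.
Local Open Scope sesquilinear_scope.

Local Notation "''[' u , v ]_ M" := (form conjC M u v)
  (at level 0, M at level 2, format "''[' u ,  v ]_ M").

Lemma char_poly_similar (R : comNzRingType) n (P Q B : 'M[R]_n) :
  Q *m P = 1%:M -> char_poly (Q *m B *m P) = char_poly B.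
Proof.
move=> QP; rewrite /char_poly /char_poly_mx.
have -> : 'X%:M - map_mx polyC (Q *m B *m P) =
   map_mx polyC Q *m ('X%:M - map_mx polyC B) *m map_mx polyC P.
  rewrite mulmxBr mulmxBl -!map_mxM; congr (_ - _).
  by rewrite mul_mx_scalar -scalemxAl -mul_scalar_mx -map_mxM QP map_mx1 mulmx1.
by rewrite !det_mulmx mulrAC -det_mulmx -map_mxM QP map_mx1 det1 mul1r.
Qed.

Lemma prod_XsubC_simple_root (F : idomainType) (I : finType) (d : I -> F)
    (r : F) (q : {poly F}) :
  \prod_i ('X - (d i)%:P) = ('X - r%:P) * q -> ~~ root q r ->
  exists i0, d i0 = r /\ forall i, i != i0 -> d i != r.
Proof.
move=> dq qr.
have : (\prod_i ('X - (d i)%:P)).[r] == 0.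
  by rewrite dq hornerM hornerXsubC subrr mul0r.
rewrite horner_prod => /prodf_eq0 [i0 _]; rewrite hornerXsubC subr_eq0 eq_sym => /eqP di0.
exists i0; split=> // i ii0; apply: contra qr => /eqP di.
move: dq; rewrite (bigD1 i0) //= (bigD1 i) //= di0 di.
move/(mulfI (negbT (polyXsubC_eq0 r))) => <-.
by rewrite rootM root_XsubC eqxx.
Qed.

Lemma eigenvalue_sqr1 (F : fieldType) n (A : 'M[F]_n) (x : F) :
  A *m A = 1%:M -> eigenvalue A x -> x ^+ 2 = 1.
Proof.
move=> AA /eigenvalueP [v vA v_neq0]; apply/eqP; move: v_neq0; apply: contraNT => x2.
have : v *m (A *m A) = x ^+ 2 *: v by rewrite mulmxA vA -scalemxAl vA scalerA expr2.
rewrite AA mulmx1 => /eqP; rewrite -subr_eq0 -{1}[v]scale1r -scalerBl.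
by rewrite scaler_eq0 subr_eq0 eq_sym (negPf x2).
Qed.

Lemma form_scaleB (C : numClosedFieldType) n (M : 'M[C]_n) (a b : C)
    (u v : 'rV[C]_n) :
  '[a *: u - b *: v, a *: u - b *: v]_M =
  a * a^* * '[u, u]_M - a * b^* * '[u, v]_M - b * a^* * '[v, u]_M
    + b * b^* * '[v, v]_M.
Proof.
by rewrite formDl !formDr !formNl !formNr !formZl !formZr !mulrA opprK addrA.
Qed.

Lemma hermitian_formC (C : numClosedFieldType) n (M : 'M[C]_n)
    (u v : 'rV[C]_n) :
  M \is hermsymmx -> '[v, u]_M = ('[u, v]_M)^*.
Proof.
move=> /is_hermitianmxP; rewrite expr0 scale1r => hM.
rewrite /form; have -> : v *m M *m u^t* = (u *m M *m v^t*)^t*.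
  by rewrite !trmx_mul !map_mxM trmxCK -hM mulmxA.
by rewrite !mxE.
Qed.

Lemma form_conjugate_diag (C : numClosedFieldType) n (P : 'M[C]_n)
    (d z : 'rV[C]_n) :
  '[z, z]_(P^t* *m diag_mx d *m P) = \sum_i d 0 i * `|(z *m P^t*) 0 i| ^+ 2.
Proof.
rewrite /form; have -> : z *m (P^t* *m diag_mx d *m P) *m z^t* =
    (z *m P^t*) *m diag_mx d *m (z *m P^t*)^t*.
  by rewrite trmx_mul map_mxM trmxCK !mulmxA.
rewrite mul_mx_diag mxE; apply: eq_bigr => j _.
by rewrite !mxE normCK mulrAC mulrC.
Qed.

Lemma form_indicator (C : numClosedFieldType) n (M : 'M[C]_n)
    (S T : {set 'I_n}) :
  '[\row_i (i \in S)%:R, \row_j (j \in T)%:R]_M =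
  \sum_(i in S) \sum_(j in T) M i j.
Proof.
rewrite /form mxE [RHS]exchange_big /= [RHS]big_mkcond; apply: eq_bigr => j _.
rewrite !mxE conjC_nat; case: (j \in T); rewrite ?mulr1 ?mulr0 // [RHS]big_mkcond.
by apply: eq_bigr => i _; rewrite !mxE; case: (i \in S); rewrite ?mul1r ?mul0r.
Qed.

Section NormalSpectrum.
Variables (C : numClosedFieldType) (n : nat) (A : 'M[C]_n).
Hypothesis normA : A \is normalmx.
Local Notation P := (spectralmx A).
Local Notation d := (spectral_diag A).

Lemma spectral_trCmulmx : P^t* *m P = 1%:M.
Proof. by rewrite -invmx_unitary ?spectral_unitarymx // mulVmx ?spectral_unit. Qed.

Lemma normal_spectralE : A = P^t* *m diag_mx d *m P.
Proof. by rewrite {1}(orthomx_spectralP normA) invmx_unitary ?spectral_unitarymx. Qed.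

Lemma char_poly_normal : char_poly A = \prod_i ('X - (d 0 i)%:P).
Proof.
rewrite {1}normal_spectralE char_poly_similar ?spectral_trCmulmx //.
rewrite char_poly_trig ?diag_mx_is_trig //.
by apply: eq_bigr => i _; rewrite mxE eqxx mulr1n.
Qed.

Lemma normal_formE z : '[z, z]_A = \sum_i d 0 i * `|(z *m P^t*) 0 i| ^+ 2.
Proof. by rewrite {1}normal_spectralE form_conjugate_diag. Qed.

Lemma normal_dotE z : '[z, z]_1%:M = \sum_i `|(z *m P^t*) 0 i| ^+ 2.
Proof.
have -> : 1%:M = P^t* *m diag_mx (const_mx 1) *m P.
  by rewrite diag_const_mx mulmx1 spectral_trCmulmx.
by rewrite form_conjugate_diag; apply: eq_bigr => i _; rewrite mxE mul1r.
Qed.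

Lemma normal_form_sqrE z :
  '[z, z]_(A *m A) = \sum_i d 0 i ^+ 2 * `|(z *m P^t*) 0 i| ^+ 2.
Proof.
have -> : A *m A = P^t* *m diag_mx (\row_j (d 0 j ^+ 2)) *m P.
  have PPt : P *m P^t* = 1%:M := unitarymxP (spectral_unitarymx A).
  rewrite {1 2}normal_spectralE -!mulmxA (mulmxA P) PPt.
  rewrite mul1mx (mulmxA (diag_mx d)) mulmx_diag !mulmxA.
  by congr (_ *m diag_mx _ *m _); apply/rowP => j; rewrite !mxE expr2.
rewrite form_conjugate_diag; apply: eq_bigr => i _; by rewrite mxE.
Qed.

Lemma dot_le_form_sqr :
  (forall i, 1 <= d 0 i ^+ 2) -> forall z, '[z, z]_1%:M <= '[z, z]_(A *m A).
Proof.
move=> d_ge1 z; rewrite normal_dotE normal_form_sqrE; apply: ler_sum => i _.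
by rewrite ler_peMl ?exprn_ge0.
Qed.

Lemma form_le_dot z i0 :
  (forall i, i != i0 -> d 0 i <= 1) -> (z *m P^t*) 0 i0 = 0 ->
  '[z, z]_A <= '[z, z]_1%:M.
Proof.
move=> d_le1 z_i0; rewrite normal_formE normal_dotE; apply: ler_sum => i _.
have [-> | /d_le1 di] := eqVneq i i0; first by rewrite z_i0 normr0 expr0n /= !mulr0.
by rewrite ler_piMl ?exprn_ge0.
Qed.
End NormalSpectrum.

Lemma hermitian_excess_orthogonal (C : numClosedFieldType) n (A : 'M[C]_n)
    (i0 : 'I_n) (z1 z2 : 'rV[C]_n) :
  A \is hermsymmx -> (forall i, i != i0 -> spectral_diag A 0 i <= 1) ->
  '[z1, z2]_1%:M = 0 -> '[z1, z2]_A = 0 -> '[z1, z1]_1%:M < '[z1, z1]_A ->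
  '[z2, z2]_A <= '[z2, z2]_1%:M.
Proof.
move=> hermA d_le1 dot12 form12 excess1.
have normA := hermitian_normalmx hermA.
have herm1 : (1%:M : 'M[C]_n) \is hermsymmx.
  by apply/is_hermitianmxP; rewrite expr0 scale1r tr_scalar_mx map_mx1.
(* [p z] is the coordinate of [z] along the eigenvector of the only eigenvalue
   that may exceed 1; the combination [p z2 *: z1 - p z1 *: z2] cancels it. *)
pose p := fun z : 'rV[C]_n => (z *m (spectralmx A)^t*) 0 i0.
have p1_gt0 : 0 < `|p z1| ^+ 2.
  rewrite exprn_gt0 // normr_gt0; apply/eqP => p10.
  by have := lt_le_trans excess1 (form_le_dot normA d_le1 p10); rewrite ltxx.
have orth_w : forall M, M \is hermsymmx -> '[z1, z2]_M = 0 ->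
    '[p z2 *: z1 - p z1 *: z2, p z2 *: z1 - p z1 *: z2]_M =
    `|p z2| ^+ 2 * '[z1, z1]_M + `|p z1| ^+ 2 * '[z2, z2]_M.
  move=> M hermM orthM.
  by rewrite form_scaleB (hermitian_formC z1 z2 hermM) orthM conjC0 !mulr0 !subr0 !normCK.
have w_i0 : p (p z2 *: z1 - p z1 *: z2) = 0.
  by rewrite /p mulmxBl -!scalemxAl !mxE mulrC subrr.
have := form_le_dot normA d_le1 w_i0.
rewrite (orth_w _ herm1 dot12) (orth_w _ hermA form12) => key.
rewrite -(ler_pM2l p1_gt0) -(lerD2l (`|p z2| ^+ 2 * '[z1, z1]_1%:M)).
apply: le_trans key; rewrite lerD2r; apply: ler_wpM2l; [exact: exprn_ge0 | exact: ltW].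
Qed.

Section TwoExceptionalEigenvalues.
Variables (C : numClosedFieldType) (n : nat) (A : 'M[C]_n) (r s : C) (a b : nat).
Hypotheses (normA : A \is normalmx) (r_gt1 : 1 < r) (s_ltN1 : s < -1).
Hypothesis charA :
  char_poly A = ('X - r%:P) * ('X - s%:P) * ('X - 1) ^+ a * ('X + 1) ^+ b.
Local Notation d := (spectral_diag A).

Lemma root_char_poly x :
  root (char_poly A) x -> [|| x == r, x == s, x == 1 | x == -1].
Proof.
rewrite charA /root !hornerE !mulf_eq0 !expf_eq0 !subr_eq0 addr_eq0.
by rewrite -!orbA => /or4P[->|->|/andP[_ ->]|/andP[_ ->]]; rewrite /= ?orbT.
Qed.

Lemma spectral_diag_cases i :
  [|| d 0 i == r, d 0 i == s, d 0 i == 1 | d 0 i == -1].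
Proof.
apply: root_char_poly; rewrite (char_poly_normal normA) /root horner_prod.
by apply/prodf_eq0; exists i => //; rewrite hornerXsubC subrr.
Qed.

Lemma spectral_diag_sqr_ge1 i : 1 <= d 0 i ^+ 2.
Proof.
case/or4P: (spectral_diag_cases i) => /eqP ->; rewrite ?sqrrN ?expr1n //.
  by apply: exprn_ege1; exact: ltW.
by rewrite -sqrrN; apply: exprn_ege1; rewrite lerNr ltW.
Qed.

Lemma spectral_diag_le1 : exists i0, forall i, i != i0 -> d 0 i <= 1.
Proof.
have N1_lt1 : -1 < 1 :> C by rewrite -subr_gt0 opprK addr_gt0 ?ltr01.
have s_lt1 : s < 1 := lt_trans s_ltN1 N1_lt1.
have r_simple : ~~ root (('X - s%:P) * ('X - 1) ^+ a * ('X + 1) ^+ b) r.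
  rewrite /root !hornerE !mulf_eq0 !expf_eq0 !subr_eq0 addr_eq0 !negb_or.
  by rewrite !gt_eqF ?andbF // ?(lt_trans s_lt1) ?(lt_trans N1_lt1).
have charA' : \prod_i ('X - (d 0 i)%:P) =
    ('X - r%:P) * (('X - s%:P) * ('X - 1) ^+ a * ('X + 1) ^+ b).
  by rewrite -(char_poly_normal normA) charA !mulrA.
have [i0 [_ d_neq_r]] := prod_XsubC_simple_root charA' r_simple.
exists i0 => i /d_neq_r.
by case/or4P: (spectral_diag_cases i) => /eqP ->; rewrite ?eqxx // => _; exact: ltW.
Qed.

Lemma mulmx_self_neq1 : A *m A != 1%:M.
Proof.
apply/eqP => AA; have r_eigen : eigenvalue A r.
  by rewrite eigenvalue_root_char charA /root !hornerM hornerXsubC subrr !mul0r.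
have := eigenvalue_sqr1 AA r_eigen; apply/eqP; rewrite gt_eqF //.
by rewrite expr2 -[1]mulr1 ltr_pM // ltW.
Qed.
End TwoExceptionalEigenvalues.

Section AdjacencySpectralBounds.
Variables (C : numClosedFieldType) (n : nat) (e : rel 'I_n).
Hypothesis e_sym : symmetric e.
Local Notation A := (adjmx C e).

Lemma adjmx_sqrE i j : (A *m A) i j = #|[set k | e i k && e j k]|%:R.
Proof.
rewrite mxE -sum1_card natr_sum [RHS]big_mkcond /=; apply: eq_bigr => k _.
by rewrite !mxE inE (e_sym k j); case: (e i k); case: (e j k); rewrite ?mulr1 ?mulr0.
Qed.

Lemma adjmx_sqr_diag i : (A *m A) i i = (deg e i)%:R.
Proof. by rewrite adjmx_sqrE; under eq_finset do rewrite andbb. Qed.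

Hypothesis dot_le_sqr : forall z, '[z, z]_1%:M <= '[z, z]_(A *m A).

Lemma deg_gt0 v : (0 < deg e v)%N.
Proof. by have := dot_le_sqr 'e_v; rewrite !formee adjmx_sqr_diag mxE eqxx ler1n. Qed.

Lemma common_nbhd_ineq (a b : nat) u v : u != v ->
  (a ^ 2 + b ^ 2 + 2 * a * b * #|[set k | e u k && e v k]|
    <= a ^ 2 * deg e u + b ^ 2 * deg e v)%N.
Proof.
move=> uv.
have common_sym : #|[set k | e v k && e u k]| = #|[set k | e u k && e v k]|.
  by apply: eq_card => k; rewrite !inE andbC.
have := dot_le_sqr (a%:R *: 'e_u - b%:R *: 'e_v).
rewrite !form_scaleB !formee !conjC_nat !adjmx_sqr_diag !adjmx_sqrE common_sym.
rewrite !mxE !eqxx (negPf uv) eq_sym (negPf uv) !mulr1 !mulr0 !subr0 -!natrM.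
rewrite addrAC [X in _ <= X - _]addrAC !lerBrDr -!natrD ler_nat; lia.
Qed.

Lemma nbhd_subset_deg u v : u != v -> (forall w, e u w -> e v w) ->
  (2 <= deg e u)%N /\ (deg e u + 3 <= deg e v)%N.
Proof.
move=> uv uv_sub; have common : #|[set k | e u k && e v k]| = deg e u.
  by apply: eq_card => k; rewrite !inE; apply/andb_idr/uv_sub.
(* For a = d_v - 1 and b = d_u the inequality reads
   (d_v - 1) ((d_u - 1) (d_v - 1) - d_u ^ 2) >= 0. *)
have := common_nbhd_ineq 1 1 uv; have := common_nbhd_ineq (deg e v).-1 (deg e u) uv.
rewrite common; nia.
Qed.

Hypothesis sqr_neq1 : A *m A != 1%:M.

Lemma two_nbrs_deg k i j : i != j -> e k i -> e k j -> (2 <= deg e k)%N.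
Proof.
move=> ij ki kj; rewrite /deg; have := cards2 i j; rewrite ij => <-.
by apply: subset_leq_card; apply/subsetP => w; rewrite !inE => /orP[]/eqP->.
Qed.

Lemma exists_deg_ge2 : exists x, (2 <= deg e x)%N.
Proof.
have [/existsP [x] | all_le1] := boolP [exists x, 2 <= deg e x]%N; first by exists x.
have deg1 k : deg e k = 1%N.
  have := deg_gt0 k; have : ~~ (2 <= deg e k)%N.
    by apply: contra all_le1 => k2; apply/existsP; exists k.
  lia.
case/eqP: sqr_neq1; apply/matrixP => i j; rewrite [RHS]mxE.
have [<-|ij] := eqVneq i j; first by rewrite adjmx_sqr_diag deg1.
rewrite adjmx_sqrE; apply/eqP; rewrite pnatr_eq0 cards_eq0.
apply/eqP/setP => k; rewrite !inE; apply/negP => /andP [ik jk].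
have := two_nbrs_deg (k := k) ij.
by rewrite (e_sym k i) (e_sym k j) ik jk deg1 => /(_ isT isT).
Qed.

Lemma deg1_nbhd y : deg e y = 1%N -> exists z, [set w | e y w] = [set z].
Proof. by move/eqP/cards1P. Qed.

Lemma deg1_partner y z : [set w | e y w] = [set z] -> [set w | e z w] = [set y].
Proof.
move=> Ny; apply/setP => w; rewrite !inE; apply/idP/eqP => [zw|->]; last first.
  by rewrite e_sym -(in_set (e y)) Ny set11.
apply/eqP; apply: contraT; rewrite eq_sym => yw.
have y_sub_w t : e y t -> e w t.
  by rewrite -(in_set (e y)) Ny inE => /eqP ->; rewrite e_sym.
have [+ _] := nbhd_subset_deg yw y_sub_w.
by rewrite /deg Ny cards1.
Qed.

Let e_connect_sym : connect_sym e := sym_connect_sym e_sym.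

Lemma component_closed x : closed e (component e x).
Proof. by move=> y z yz; rewrite !inE; exact: (connect_closed e_connect_sym) yz. Qed.

Lemma K2_component y z :
  [set w | e y w] = [set z] -> [set w | e z w] = [set y] ->
  component e y = [set y; z].
Proof.
move=> Ny Nz; have yz : e y z by rewrite -(in_set (e y)) Ny set11.
apply/setP => w; rewrite !inE; apply/idP/idP => [yw | /orP[]/eqP->].
- have y_z_closed : closed e [set y; z].
    apply: (intro_closed e_connect_sym) => u t ut; rewrite !inE.
    case/orP=> /eqP uE; move: ut;
      by rewrite uE -(in_set (e _)) ?Ny ?Nz inE => ->; rewrite ?orbT.
  by have := closed_connect y_z_closed yw; rewrite !inE eqxx => <-.
- exact: connect0.
- exact: connect1.
Qed.

Lemma component_deg_ge2 x : (2 <= deg e x)%N ->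
  forall y, y \in component e x -> (2 <= deg e y)%N.
Proof.
move=> x_deg y; rewrite inE => xy; case: leqP => // y_deg.
have /deg1_nbhd [z Ny] : deg e y = 1%N by have := deg_gt0 y; lia.
have := K2_component Ny (deg1_partner Ny); move/setP/(_ x).
rewrite !inE e_connect_sym xy => /esym/orP[]/eqP xE; move: x_deg.
  by rewrite xE /deg Ny cards1.
by rewrite xE /deg (deg1_partner Ny) cards1.
Qed.

Local Notation chi S := (\row_i (i \in S)%:R : 'rV[C]_n).

Lemma form_indicator_dot (S T : {set 'I_n}) : '[chi S, chi T]_1%:M = #|S :&: T|%:R.
Proof.
rewrite form_indicator -sum1_card natr_sum [RHS]big_mkcond [LHS]big_mkcond /=.
apply: eq_bigr => i _; rewrite inE; case: (i \in S) => //=.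
rewrite big_mkcond (bigD1 i) //= big1 ?addr0 => [|j ji]; first by rewrite mxE eqxx.
by rewrite mxE eq_sym (negPf ji); case: (j \in T).
Qed.

Lemma form_indicator_adj (S T : {set 'I_n}) : closed e T ->
  '[chi S, chi T]_A = \sum_(i in S :&: T) (deg e i)%:R.
Proof.
move=> T_closed; rewrite form_indicator [RHS]big_mkcond [LHS]big_mkcond /=.
apply: eq_bigr => i _; rewrite inE; case: (i \in S) => //=.
case iT: (i \in T); last first.
  apply: big1 => j jT; rewrite mxE; case ij: (e i j) => //.
  by rewrite (T_closed _ _ ij) jT in iT.
rewrite /deg -sum1_card natr_sum [RHS]big_mkcond [LHS]big_mkcond /=.
apply: eq_bigr => j _; rewrite mxE inE.
by case ij: (e i j); rewrite -?(T_closed _ _ ij) ?iT //; case: (j \in T).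
Qed.

Lemma indicator_excess (S : {set 'I_n}) : closed e S -> S != set0 ->
  {in S, forall i, 2 <= deg e i}%N -> '[chi S, chi S]_1%:M < '[chi S, chi S]_A.
Proof.
move=> S_closed S_neq0 S_deg.
rewrite form_indicator_dot form_indicator_adj // setIid -natr_sum ltr_nat.
have : (\sum_(i in S) 2 <= \sum_(i in S) deg e i)%N by apply: leq_sum.
rewrite sum_nat_const -card_gt0 in S_neq0 *; lia.
Qed.

Hypothesis excess_orthogonal : forall z1 z2 : 'rV[C]_n,
  '[z1, z2]_1%:M = 0 -> '[z1, z2]_A = 0 -> '[z1, z1]_1%:M < '[z1, z1]_A ->
  '[z2, z2]_A <= '[z2, z2]_1%:M.

Lemma closed_deg_ge2_meet (S T : {set 'I_n}) :
  closed e S -> closed e T -> S != set0 -> T != set0 ->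
  {in S, forall i, 2 <= deg e i}%N -> {in T, forall i, 2 <= deg e i}%N ->
  S :&: T != set0.
Proof.
move=> S_closed T_closed S_neq0 T_neq0 S_deg T_deg; apply/eqP => ST0.
have dot0 : '[chi S, chi T]_1%:M = 0 by rewrite form_indicator_dot ST0 cards0.
have adj0 : '[chi S, chi T]_A = 0 by rewrite form_indicator_adj // ST0 big_set0.
have := excess_orthogonal dot0 adj0 (indicator_excess S_closed S_neq0 S_deg).
by move/(lt_le_trans (indicator_excess T_closed T_neq0 T_deg)); rewrite ltxx.
Qed.

Lemma component_neq0 x : component e x != set0.
Proof. by apply/set0Pn; exists x; rewrite inE connect0. Qed.

Theorem adjacency_structure :
  (exists x0 : 'I_n,
      (forall y, y \in component e x0 -> (2 <= deg e y)%N) /\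
      (forall y, y \notin component e x0 ->
         exists z, e y z /\ component e y = [set y; z])) /\
  (forall u v : 'I_n, u != v -> (forall w, e u w -> e v w) ->
      (deg e u + 3 <= deg e v)%N).
Proof.
split; last by move=> u v uv /(nbhd_subset_deg uv) [].
have [x0 x0_deg] := exists_deg_ge2; exists x0; split; first exact: component_deg_ge2.
move=> y y_out; case: (leqP 2 (deg e y)) => [y_deg | y_deg].
  have /set0Pn [w] := closed_deg_ge2_meet (component_closed x0)
    (component_closed y) (component_neq0 x0) (component_neq0 y)
    (component_deg_ge2 x0_deg) (component_deg_ge2 y_deg).
  rewrite !inE => /andP [x0w yw]; move: y_out; rewrite inE.
  by rewrite (connect_trans x0w) // e_connect_sym.
have /deg1_nbhd [z Ny] : deg e y = 1%N by have := deg_gt0 y; lia.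
exists z; split; first by rewrite -(in_set (e y)) Ny set11.
exact: K2_component Ny (deg1_partner Ny).
Qed.
End AdjacencySpectralBounds.

Theorem lemma2p3 (R : rcfType) (n : nat) (e : rel 'I_n) :
  simple_graph e ->
  (exists (r s : R) (a b : nat),
      1 < r /\ s < -1 /\
      char_poly (adjmx R e) =
        ('X - r%:P) * ('X - s%:P) * ('X - 1) ^+ a * ('X + 1) ^+ b) ->
  (exists x0 : 'I_n,
      (forall y, y \in component e x0 -> (2 <= deg e y)%N) /\
      (forall y, y \notin component e x0 ->
         exists z, e y z /\ component e y = [set y; z])) /\
  (forall u v : 'I_n, u != v -> (forall w, e u w -> e v w) ->
      (deg e u + 3 <= deg e v)%N).
Proof.
move=> [e_sym _] [r [s [a [b [r_gt1 [s_ltN1 charA]]]]]].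
(* The spectral theorem needs an algebraically closed field: move to R[i]. *)
pose f := real_complex R.
have charAi : char_poly (adjmx R[i] e) =
    ('X - (f r)%:P) * ('X - (f s)%:P) * ('X - 1) ^+ a * ('X + 1) ^+ b.
  have -> : adjmx R[i] e = map_mx f (adjmx R e).
    by apply/matrixP => i j; rewrite !mxE /f rmorph_nat.
  rewrite -map_char_poly charA !rmorphM !rmorphXn !rmorphB !rmorphD /=.
  by rewrite !map_polyX !map_polyC /= rmorph1.
have r_gt1' : 1 < f r by rewrite -(rmorph1 f) ltcR.
have s_ltN1' : f s < -1 by rewrite -(rmorph1 f) -rmorphN ltcR.
have hermA : adjmx R[i] e \is hermsymmx.
  apply/is_hermitianmxP; rewrite expr0 scale1r.
  by apply/matrixP => i j; rewrite !mxE conjC_nat e_sym.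
have normA := hermitian_normalmx hermA.
have [i0 d_le1] := spectral_diag_le1 normA r_gt1' s_ltN1' charAi.
apply: (adjacency_structure e_sym).
- exact/(dot_le_form_sqr normA)/(spectral_diag_sqr_ge1 normA r_gt1' s_ltN1' charAi).
- exact: mulmx_self_neq1 r_gt1' charAi.
- by move=> z1 z2; apply: hermitian_excess_orthogonal hermA d_le1.
Qed.
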